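(* Let $n=2k$ be a positive even integer, let $f$ be a bent Boolean function on $\mathbb{F}_{2^n}$, and let $a_1,a_2,a_3\in\mathbb{F}_{2^n}$. Put $f_i(x)=f(x)+\mathrm{Tr}^n_1(a_ix)$ for $i=1,2,3$ and $$\sigma=f_1f_2+f_1f_3+f_2f_3=f(x)+\mathrm{Tr}^n_1(a_1x)\mathrm{Tr}^n_1(a_2x)+\mathrm{Tr}^n_1(a_1x)\mathrm{Tr}^n_1(a_3x)+\mathrm{Tr}^n_1(a_2x)\mathrm{Tr}^n_1(a_3x).$$ Then $\sigma$ is bent if and only if $D_{a_1+a_2}D_{a_1+a_3}f^*=0$, and $\sigma$ is semi-bent if and only if $D_{a_1+a_2}D_{a_1+a_3}f^*=1$ (the constant function $1$). If $\sigma$ is bent, then $$\sigma^*(x)=f^*(x+a_1)f^*(x+a_2)+f^*(x+a_1)f^*(x+a_3)+f^*(x+a_2)f^*(x+a_3).$$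
   Context: For a Boolean function $f:\mathbb{F}_{2^n}\to\mathbb{F}_2$, $W_f(a)=\sum_{x}(-1)^{f(x)+\mathrm{Tr}^n_1(ax)}$ with $\mathrm{Tr}^n_1(x)=\sum_{i=0}^{n-1}x^{2^i}$. $f$ is bent if $|W_f(a)|=2^{n/2}$ for all $a$, and its dual $f^*$ is defined by $W_f(a)=2^{n/2}(-1)^{f^*(a)}$. $f$ is semi-bent if $W_f$ takes values in $\{0,\pm2^{n/2+1}\}$. Derivatives: $D_af(x)=f(x)+f(x+a)$ and $D_aD_bf(x)=f(x)+f(x+a)+f(x+b)+f(x+a+b)$. *)

From HB Require Import structures.
From mathcomp Require Import all_boot all_order all_algebra all_field.
Set Implicit Arguments. Unset Strict Implicit. Unset Printing Implicit Defensive.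
Import GRing.Theory Num.Theory.
Local Open Scope ring_scope.

(* Boolean functions F -> F_2 are represented as F -> bool; F_2-addition is xor
   (addb, notation (+)) and F_2-multiplication is &&. *)

(* Absolute trace Tr^n_1(x) = sum_{i<n} x^(2^i), an element of F (in {0,1}
   when #|F| = 2^n); we read it in F_2 = bool. *)
Definition trF (F : finFieldType) (n : nat) (x : F) : F := \sum_(i < n) x ^+ (2 ^ i).
Definition tr (F : finFieldType) (n : nat) (x : F) : bool := trF n x == 1.

Definition walsh (F : finFieldType) (n : nat) (f : F -> bool) (a : F) : int :=
  \sum_(x : F) (-1) ^+ (nat_of_bool (f x (+) tr n (a * x))).

Definition bent (F : finFieldType) (n k : nat) (f : F -> bool) : Prop :=
  forall a : F, `|walsh n f a| = (2 ^ k)%:Z.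

Definition semibent (F : finFieldType) (n k : nat) (f : F -> bool) : Prop :=
  forall a : F, walsh n f a = 0 \/ walsh n f a = (2 ^ k.+1)%:Z
                \/ walsh n f a = - (2 ^ k.+1)%:Z.

(* dual: W_f(a) = 2^k (-1)^(f^*(a)); i.e. f^*(a) = 1 iff W_f(a) < 0
   (meaningful when f is bent). *)
Definition dual (F : finFieldType) (n : nat) (f : F -> bool) (a : F) : bool :=
  walsh n f a < 0.

Definition D (F : finFieldType) (a : F) (f : F -> bool) (x : F) : bool :=
  f x (+) f (x + a).
Definition DD (F : finFieldType) (a b : F) (f : F -> bool) (x : F) : bool :=
  f x (+) f (x + a) (+) f (x + b) (+) f (x + a + b).

Definition fi (F : finFieldType) (n : nat) (f : F -> bool) (a : F) (x : F) : bool :=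
  f x (+) tr n (a * x).
Definition sigma (F : finFieldType) (n : nat) (f : F -> bool) (a1 a2 a3 : F)
  (x : F) : bool :=
  (fi n f a1 x && fi n f a2 x) (+) (fi n f a1 x && fi n f a3 x)
    (+) (fi n f a2 x && fi n f a3 x).

From mathcomp Require Import all_boot all_algebra all_field ring.
Import GRing.Theory Num.Theory.
Local Open Scope ring_scope.

(* For bits u1, u2, u3 the majority maj(u1,u2,u3) satisfies
   2 (-1)^maj = (-1)^u1 + (-1)^u2 + (-1)^u3 - (-1)^(u1+u2+u3).  As sigma is the
   majority of the f_i and the trace is additive, this gives
   2 W_sigma(a) = W_f(a+a1) + W_f(a+a2) + W_f(a+a3) - W_f(a+a1+a2+a3),
   and for bent f each term is 2^k times the sign of f^* at that point.  A signed
   sum b1 + b2 + b3 - b4 of four signs is +-2 when their product is 1 (with the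
   sign given by the majority of the first three) and 0 or +-4 otherwise; the
   product of the four signs of f^* is (-1)^(D_{a1+a2} D_{a1+a3} f^*(a+a1)). *)

Section AbsoluteTrace.
Context {F : finFieldType} {n : nat}.
Hypotheses (n_gt0 : (0 < n)%N) (cardF : #|F| = (2 ^ n)%N).

Lemma pchar2F : 2%N \in [pchar F].
Proof. exact: card_finPcharP cardF _. Qed.

Lemma trF_add (x y : F) : trF n (x + y) = trF n x + trF n y.
Proof.
rewrite /trF -big_split; apply: eq_bigr => i _.
by rewrite exprDn_pchar // pnatX pnatE // pchar2F.
Qed.

Lemma trF_sqr (x : F) : trF n x ^+ 2 = trF n x.
Proof.
rewrite -[_ ^+ 2]/(pFrobenius_aut pchar2F _) rmorph_sum /=.
under eq_bigr do rewrite pFrobenius_autE -exprM -expnSr.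
case: n n_gt0 cardF => // m _ cardF'.
rewrite big_ord_recr [RHS]big_ord_recl /= -cardF' expf_card expn0 expr1 addrC.
by congr (_ + _); apply: eq_bigr => i _.
Qed.

Lemma trF_eq01 (x : F) : (trF n x == 0) || (trF n x == 1).
Proof.
have : trF n x * (trF n x - 1) == 0 by rewrite mulrBr mulr1 -expr2 trF_sqr subrr.
by rewrite mulf_eq0 subr_eq0.
Qed.

Lemma tr_add (x y : F) : tr n (x + y) = tr n x (+) tr n y.
Proof.
rewrite /tr trF_add.
have tr1 : 1 + 1 = 0 :> F := addrr_pchar2 pchar2F 1.
by case/orP: (trF_eq01 x) => /eqP ->; case/orP: (trF_eq01 y) => /eqP ->;
  rewrite ?addr0 ?add0r ?tr1 ?eqxx // eq_sym oner_eq0.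
Qed.

End AbsoluteTrace.

Lemma DD_translate {F : finFieldType} (pchar2 : 2%N \in [pchar F])
    (g : F -> bool) (a1 a2 a3 x : F) :
  DD (a1 + a2) (a1 + a3) g (x + a1) =
  g (x + a1) (+) g (x + a2) (+) g (x + a3) (+) g (x + a1 + a2 + a3).
Proof.
have shift b : x + a1 + (a1 + b) = x + b.
  by rewrite addrA -(addrA x) addrr_pchar2 // addr0.
by rewrite /DD !shift addrA (addrAC x a2).
Qed.

Definition signb (b : bool) : int := (-1) ^+ b.

Definition maj3 (b1 b2 b3 : bool) : bool := (b1 && b2) (+) (b1 && b3) (+) (b2 && b3).

Definition sign4 (b1 b2 b3 b4 : bool) : int :=
  signb b1 + signb b2 + signb b3 - signb b4.

Lemma maj3_addb (b1 b2 b3 s : bool) :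
  maj3 (b1 (+) s) (b2 (+) s) (b3 (+) s) = maj3 b1 b2 b3 (+) s.
Proof. by case: b1; case: b2; case: b3; case: s. Qed.

Lemma signb_maj3 (b1 b2 b3 : bool) :
  2 * signb (maj3 b1 b2 b3) = sign4 b1 b2 b3 (b1 (+) b2 (+) b3).
Proof. by case: b1; case: b2; case: b3. Qed.

Lemma norm_sign4_eq2 (b1 b2 b3 b4 : bool) :
  (`|sign4 b1 b2 b3 b4| == 2) = ~~ (b1 (+) b2 (+) b3 (+) b4).
Proof. by case: b1; case: b2; case: b3; case: b4. Qed.

Lemma sign4_eq0_or_4 (b1 b2 b3 b4 : bool) :
  [|| sign4 b1 b2 b3 b4 == 0, sign4 b1 b2 b3 b4 == 4 | sign4 b1 b2 b3 b4 == -4]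
  = b1 (+) b2 (+) b3 (+) b4.
Proof. by case: b1; case: b2; case: b3; case: b4. Qed.

Lemma sign4_lt0 (b1 b2 b3 b4 : bool) : ~~ (b1 (+) b2 (+) b3 (+) b4) ->
  (sign4 b1 b2 b3 b4 < 0) = maj3 b1 b2 b3.
Proof. by case: b1; case: b2; case: b3; case: b4. Qed.

Lemma bent_walshE {F : finFieldType} {n k : nat} {f : F -> bool} :
  bent n k f -> forall b, walsh n f b = (2 ^ k)%:Z * signb (dual n f b).
Proof.
move=> f_bent b; move: (f_bent b); rewrite /dual /signb; case: ltrP => [W_lt0|W_ge0].
  by rewrite ltr0_norm // => /eqP; rewrite eqr_oppLR mulrN1 => /eqP.
by rewrite ger0_norm // mulr1.
Qed.

Section SigmaWalsh.
Context {F : finFieldType} {n : nat} (f : F -> bool) (a1 a2 a3 : F).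
Hypotheses (n_gt0 : (0 < n)%N) (cardF : #|F| = (2 ^ n)%N).

Lemma walsh_sigma (a : F) :
  2 * walsh n (sigma n f a1 a2 a3) a =
  walsh n f (a + a1) + walsh n f (a + a2) + walsh n f (a + a3)
    - walsh n f (a + a1 + a2 + a3).
Proof.
rewrite /walsh mulr_sumr -!big_split -sumrB /=; apply: eq_bigr => x _.
have fiE b : fi n f b x (+) tr n (a * x) = f x (+) tr n ((a + b) * x).
  by rewrite /fi mulrDl tr_add // addbAC addbA.
rewrite -maj3_addb !fiE -[(-1) ^+ _]/(signb _) signb_maj3 /sign4.
congr (_ + _ + _ - signb _).
rewrite !mulrDl !tr_add //.
by case: (f x); case: (tr n (a * x)); case: (tr n (a1 * x)); case: (tr n (a2 * x));
  case: (tr n (a3 * x)).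
Qed.
End SigmaWalsh.

Lemma double_eq_scaled {R : numDomainType} {c x y : R} :
  c != 0 -> 2 * x = c * y -> forall z, (x == c * z) = (y == 2 * z).
Proof.
move=> c_neq0 xy z; have two_neq0 : (2 : R) != 0 by rewrite pnatr_eq0.
by rewrite -(inj_eq (mulfI two_neq0)) xy mulrCA (inj_eq (mulfI c_neq0)).
Qed.

Section BentSigma.
Context {F : finFieldType} {n k : nat} {f : F -> bool} (a1 a2 a3 : F).
Hypotheses (n_gt0 : (0 < n)%N) (cardF : #|F| = (2 ^ n)%N) (f_bent : bent n k f).

Let d := dual n f.
Let s := sigma n f a1 a2 a3.
Let sign4_dual (a : F) := sign4 (d (a + a1)) (d (a + a2)) (d (a + a3)) (d (a + a1 + a2 + a3)).
Let parity (a : F) := d (a + a1) (+) d (a + a2) (+) d (a + a3) (+) d (a + a1 + a2 + a3).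

Let pow2_gt0 : 0 < (2 ^ k)%:Z. Proof. by rewrite ltz_nat expn_gt0. Qed.
Let pow2_neq0 : (2 ^ k)%:Z != 0. Proof. exact: lt0r_neq0. Qed.

Lemma walsh_sigma_bent (a : F) : 2 * walsh n s a = (2 ^ k)%:Z * sign4_dual a.
Proof. by rewrite walsh_sigma // !(bent_walshE f_bent) /sign4_dual /sign4; ring. Qed.

Lemma norm_walsh_sigma (a : F) : (`|walsh n s a| == (2 ^ k)%:Z) = ~~ parity a.
Proof.
have norm_eq : 2 * `|walsh n s a| = (2 ^ k)%:Z * `|sign4_dual a|.
  by rewrite -[2]normr_nat -[(2 ^ k)%:Z]gtr0_norm // -!normrM walsh_sigma_bent.
by rewrite -norm_sign4_eq2 -[X in _ == X]mulr1 (double_eq_scaled pow2_neq0 norm_eq).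
Qed.

Lemma walsh_sigma_semibent (a : F) :
  [|| walsh n s a == 0, walsh n s a == (2 ^ k.+1)%:Z | walsh n s a == - (2 ^ k.+1)%:Z]
  = parity a.
Proof.
have pow2S : (2 ^ k.+1)%:Z = (2 ^ k)%:Z * 2 by rewrite expnS mulnC PoszM.
rewrite /parity -sign4_eq0_or_4 -[sign4 _ _ _ _]/(sign4_dual a) pow2S -mulrN.
rewrite -[X in walsh _ _ _ == X](mulr0 (2 ^ k)%:Z).
by rewrite !(double_eq_scaled pow2_neq0 (walsh_sigma_bent a)) mulr0.
Qed.

Lemma walsh_sigma_lt0 (a : F) : (walsh n s a < 0) = (sign4_dual a < 0).
Proof. by rewrite -(pmulr_rlt0 _ (ltr0n _ 2)) walsh_sigma_bent pmulr_rlt0. Qed.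

Lemma bent_sigmaP : bent n k s <-> forall a, parity a = false.
Proof.
split=> [s_bent a | even a]; first by apply/negbTE; rewrite -norm_walsh_sigma s_bent.
by apply/eqP; rewrite norm_walsh_sigma even.
Qed.

Lemma semibent_sigmaP : semibent n k s <-> forall a, parity a = true.
Proof.
split=> [s_semibent a | odd a].
  by rewrite -walsh_sigma_semibent; case: (s_semibent a) => [|[|]] ->; rewrite eqxx ?orbT.
by have := walsh_sigma_semibent a; rewrite odd => /or3P[] /eqP; auto.
Qed.

Lemma dual_sigma (a : F) : parity a = false ->
  dual n s a = maj3 (d (a + a1)) (d (a + a2)) (d (a + a3)).
Proof. by move=> /negbT even; rewrite /dual walsh_sigma_lt0 sign4_lt0. Qed.

Lemma DD_dual_constP (b : bool) :
  (forall x, DD (a1 + a2) (a1 + a3) d x = b) <-> (forall a, parity a = b).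
Proof.
have pchar2 := pchar2F cardF.
split=> [DD_b a | parity_b x]; first by rewrite /parity -(DD_translate pchar2).
by rewrite -[x](addrNK a1) (DD_translate pchar2); apply: parity_b.
Qed.

End BentSigma.

Theorem proposition1 (F : finFieldType) (n k : nat) (hk : (0 < k)%N)
    (hn : n = (2 * k)%N) (hF : #|F| = (2 ^ n)%N)
    (f : F -> bool) (hf : bent n k f) (a1 a2 a3 : F) :
  (bent n k (sigma n f a1 a2 a3) <->
     (forall x, DD (a1 + a2) (a1 + a3) (dual n f) x = false))
  /\ (semibent n k (sigma n f a1 a2 a3) <->
     (forall x, DD (a1 + a2) (a1 + a3) (dual n f) x = true))
  /\ (bent n k (sigma n f a1 a2 a3) ->
      forall x, dual n (sigma n f a1 a2 a3) x =
        (dual n f (x + a1) && dual n f (x + a2))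
        (+) (dual n f (x + a1) && dual n f (x + a3))
        (+) (dual n f (x + a2) && dual n f (x + a3))).
Proof.
have n_gt0 : (0 < n)%N by rewrite hn muln_gt0 hk.
have DD_parity := DD_dual_constP (f := f) a1 a2 a3 hF.
have sigma_bentP := bent_sigmaP a1 a2 a3 n_gt0 hF hf.
split; [|split].
- exact: iff_trans sigma_bentP (iff_sym (DD_parity false)).
- exact: iff_trans (semibent_sigmaP a1 a2 a3 n_gt0 hF hf) (iff_sym (DD_parity true)).
- by move=> /sigma_bentP even x; rewrite (dual_sigma a1 a2 a3 n_gt0 hF hf _ (even x)).
Qed.
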